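(* Let $n\ge 1$ be an integer and $0<p_{\mathrm{tot}}\le 1$. Let $\mathcal X$ be the family of random variables $$\mathcal X=\Big\{\max\big(\{X_i\}_{i=1}^n\big)\ \Big|\ X_i\sim\mathrm{geom}(p_i)\text{ independent},\ 0<p_i\le 1,\ \prod_{i=1}^n p_i=p_{\mathrm{tot}}\Big\}.$$ Let $X_{\mathrm{hom}}\in\mathcal X$ be the member with $p_1=\dots=p_n$, i.e. $X_{\mathrm{hom}}=\max(\{X_{\mathrm{hom},i}\}_{i=1}^n)$ with the $X_{\mathrm{hom},i}$ independent and $X_{\mathrm{hom},i}\sim\mathrm{geom}(\sqrt[n]{p_{\mathrm{tot}}})$. Then for every $X\in\mathcal X$ we have $X\ge_{\mathrm{st}}X_{\mathrm{hom}}$.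
   Context: $\mathrm{geom}(p)$ denotes the geometric distribution on $\{1,2,3,\dots\}$ with success probability $p$: $\Pr(X=k)=(1-p)^{k-1}p$, so $\Pr(X\le k)=1-(1-p)^k$. For random variables $X,Y$, $X\ge_{\mathrm{st}}Y$ ($X$ stochastically dominates $Y$) means $\Pr(X>z)\ge\Pr(Y>z)$ for all real $z$. *)

From HB Require Import structures.
From mathcomp Require Import all_boot all_order all_algebra.
From mathcomp Require Import all_classical all_reals all_analysis.
Set Implicit Arguments. Unset Strict Implicit. Unset Printing Implicit Defensive.
Import Order.TTheory GRing.Theory Num.Theory.
Local Open Scope classical_set_scope.
Local Open Scope ring_scope.

Definition is_geom {R : realType} {d : measure_display} {T : measurableType d}
  (P : probability T R) (X : {RV P >-> R}) (p : R) : Prop :=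
  forall k : nat, P (X @^-1` [set (k.+1)%:R]) = ((1 - p) ^+ k * p)%:E.

Definition mutually_independent {R : realType} {d : measure_display}
  {T : measurableType d} (P : probability T R) (n : nat)
  (X : 'I_n -> {RV P >-> R}) : Prop :=
  forall B : 'I_n -> set R, (forall i, measurable (B i)) ->
    P (\bigcap_(i in [set: 'I_n]) (X i @^-1` B i))
    = (\prod_(i < n) P (X i @^-1` B i))%E.

(* Pointwise maximum of the family (seed 0; the variables are a.s. >= 1). *)
Definition max_rv {R : realType} {T : Type} (n : nat) (X : 'I_n -> T -> R)
  (w : T) : R := \big[Num.max/0]_(i < n) X i w.

From HB Require Import structures.
From mathcomp Require Import all_boot all_order all_algebra.
From mathcomp Require Import all_classical all_reals all_analysis.
From mathcomp Require Import ring lra.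
Import Order.TTheory GRing.Theory Num.Theory.
Import numFieldNormedType.Exports.
Local Open Scope classical_set_scope.
Local Open Scope ring_scope.

(* For z >= 0 and k = floor z, independence gives Pr(max X_i <= z) = prod_i F(p_i)
   with F(t) = 1 - (1 - t)^k, so it suffices that prod_i F(p_i) <= F(q)^n whenever
   prod_i p_i = q^n.  This is Jensen's inequality for the concave function
   s |-> ln F(e^s): its derivative is the elasticity t F'(t) / F(t)
   = k t (1 - t)^(k-1) / F(t), which is nonincreasing in t = e^s.  Concretely, each
   ln F(p_i) lies below the tangent line at q in the variable ln t, and the tangent
   terms cancel on summation because sum_i ln p_i = n ln q. *)

Section DeriveSign.
Context {R : realType}.

Lemma is_derive_continuous (f df : R -> R) (a b : R) :
  (forall y, a <= y <= b -> is_derive y 1 f (df y)) ->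
  {within `[a, b], continuous f}.
Proof.
move=> fd; apply/continuous_in_subspaceT => y; rewrite inE /= in_itv /= => yab.
by apply/differentiable_continuous/derivable1_diffP; case: (fd y yab).
Qed.

Lemma derive_sign_change_le (f df : R -> R) (a b c x : R) :
  (forall y, a < y <= b -> is_derive y 1 f (df y)) ->
  (forall y, a < y < c -> 0 <= df y) ->
  (forall y, c < y < b -> df y <= 0) ->
  a < c <= b -> a < x <= b -> f x <= f c.
Proof.
move=> fd df_ge0 df_le0 /andP[ac cb] /andP[ax xb].
have fdv y : a < y <= b -> derivable f y 1 by move=> /fd [].
have fdf y : a < y <= b -> derive1 f y = df y.
  by move=> /fd yd; rewrite derive1E derive_val.
have fc u v : a < u -> v <= b -> {within `[u, v], continuous f}.
  move=> au vb; apply: (@is_derive_continuous f df) => y /andP[uy yv].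
  by apply: fd; rewrite (lt_le_trans au uy) (le_trans yv vb).
have [xc|cx] := leP x c.
- apply: (@ger0_derive1_le_cc _ f x c _ _ (fc _ _ ax cb));
    rewrite ?in_itv /= ?lexx ?xc // => y /[!in_itv] /= /andP[xy yc];
    have ayb : a < y <= b by rewrite (lt_trans ax xy) (le_trans (ltW yc) cb).
  + exact: fdv.
  + by rewrite fdf // df_ge0 // (lt_trans ax xy).
- apply: (@ler0_derive1_le_cc _ f c x _ _ (fc _ _ ac xb));
    rewrite ?in_itv /= ?lexx ?(ltW cx) // => y /[!in_itv] /= /andP[cy yx];
    have ayb : a < y <= b by rewrite (lt_trans ac cy) (le_trans (ltW yx) xb).
  + exact: fdv.
  + by rewrite fdf // df_le0 // cy (lt_le_trans yx xb).
Qed.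

End DeriveSign.

Section GeomCdf.
Context {R : realType}.
Implicit Types (m : nat) (s t : R).

Definition geom_cdf (m : nat) (t : R) : R := 1 - (1 - t) ^+ m.

Definition geom_cdf_elasticity (m : nat) (t : R) : R :=
  m%:R * t * (1 - t) ^+ m.-1 / geom_cdf m t.

Lemma geom_cdf0 t : geom_cdf 0 t = 0.
Proof. by rewrite /geom_cdf expr0 subrr. Qed.

Lemma geom_cdfE m t : geom_cdf m t = t * \sum_(k < m) (1 - t) ^+ k.
Proof.
by rewrite /geom_cdf -opprB subrX1 addrAC subrr sub0r mulNr opprK.
Qed.

Lemma geom_cdf_gt0 m t : (0 < m)%N -> 0 < t <= 1 -> 0 < geom_cdf m t.
Proof.
move=> m_gt0 /andP[t_gt0 t_le1]; rewrite /geom_cdf subr_gt0 exprn_ilt1 ?subr_ge0 //.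
  by rewrite -lt0n.
by rewrite ltrBlDl ltrDr.
Qed.

Lemma is_derive_geom_cdf m t :
  is_derive t 1 (geom_cdf m) (m%:R * (1 - t) ^+ m.-1).
Proof.
have dB : is_derive t 1 (fun t : R => 1 - t) (-1).
  by have := is_deriveB (is_derive_cst (1 : R) t 1) (is_derive_id t (1 : R)); rewrite sub0r.
have := is_deriveB (is_derive_cst (1 : R) t 1) (is_deriveX m dB).
rewrite exprfctE => dF; apply: (is_derive_eq dF).
by rewrite sub0r /GRing.scale /= mulrN1 opprK.
Qed.

Lemma geom_cdf_elasticity_antitone m s t : 0 < s -> s <= t -> t <= 1 ->
  geom_cdf_elasticity m t <= geom_cdf_elasticity m s.
Proof.
move=> s_gt0 st t_le1; case: m => [|m]; first by rewrite /geom_cdf_elasticity !mul0r.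
have t_gt0 := lt_le_trans s_gt0 st.
have Ft : 0 < geom_cdf m.+1 t by rewrite geom_cdf_gt0 // t_gt0.
have Fs : 0 < geom_cdf m.+1 s by rewrite geom_cdf_gt0 // s_gt0 (le_trans st).
rewrite /geom_cdf_elasticity ler_pdivrMr // [leRHS]mulrAC ler_pdivlMr // !geom_cdfE /=.
set a := 1 - t; set b := 1 - s.
have a_ge0 : 0 <= a by rewrite subr_ge0.
have ab : a <= b by rewrite lerB.
have key : a ^+ m * \sum_(k < m.+1) b ^+ k <= b ^+ m * \sum_(k < m.+1) a ^+ k.
  rewrite !mulr_sumr; apply: ler_sum => -[k /=]; rewrite ltnS => km _.
  have b_ge0 := le_trans a_ge0 ab.
  rewrite -(subnK km) !exprD [leLHS]mulrAC.
  by rewrite !ler_wpM2r ?exprn_ge0 // lerXn2r.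
set Sa := \sum_(k < m.+1) a ^+ k; set Sb := \sum_(k < m.+1) b ^+ k.
have mst_ge0 : 0 <= m.+1%:R * s * t by rewrite !mulr_ge0 // ltW.
have -> : m.+1%:R * t * a ^+ m * (s * Sb) = m.+1%:R * s * t * (a ^+ m * Sb) by ring.
have -> : m.+1%:R * s * b ^+ m * (t * Sa) = m.+1%:R * s * t * (b ^+ m * Sa) by ring.
exact: ler_wpM2l.
Qed.

Lemma ln_geom_cdf_tangent m p q : (0 < m)%N -> 0 < p <= 1 -> 0 < q <= 1 ->
  ln (geom_cdf m p) <= ln (geom_cdf m q) + geom_cdf_elasticity m q * (ln p - ln q).
Proof.
move=> m_gt0 hp hq; set c := geom_cdf_elasticity m q.
have q_gt0 : 0 < q by case/andP: hq.
suff : ln (geom_cdf m p) - c * ln p <= ln (geom_cdf m q) - c * ln q by lra.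
apply: (@derive_sign_change_le _ (fun x => ln (geom_cdf m x) - c * ln x)
  (fun x => (geom_cdf_elasticity m x - c) / x) 0 1) => //.
- move=> x hx; have x_gt0 : 0 < x by case/andP: hx.
  have := is_deriveB (is_derive1_comp (is_derive1_ln (geom_cdf_gt0 m x m_gt0 hx))
    (is_derive_geom_cdf m x)) (is_deriveZ c (is_derive1_ln x_gt0)).
  move/is_derive_eq; apply.
  rewrite /geom_cdf_elasticity /GRing.scale /=; field.
  by rewrite (gt_eqF x_gt0) (gt_eqF (geom_cdf_gt0 m x m_gt0 hx)).
- move=> y /andP[y_gt0 yq]; apply: divr_ge0; last exact: ltW.
  rewrite subr_ge0 geom_cdf_elasticity_antitone ?(ltW yq) //; by case/andP: hq.
- move=> y /andP[qy y_lt1]; have y_gt0 := lt_trans q_gt0 qy.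
  rewrite ler_pdivrMr // mul0r subr_le0.
  by rewrite geom_cdf_elasticity_antitone ?ltW.
Qed.

Lemma ln_prod (I : Type) (r : seq I) (P : pred I) (f : I -> R) :
  (forall i, P i -> 0 < f i) ->
  ln (\prod_(i <- r | P i) f i) = \sum_(i <- r | P i) ln (f i).
Proof.
move=> f_gt0; elim: r => [|i r IH]; first by rewrite !big_nil ln1.
rewrite !big_cons; case: ifP => // Pi.
by rewrite lnM ?IH // posrE ?f_gt0 // prodr_gt0.
Qed.

Lemma prod_geom_cdf_le n m (p : 'I_n -> R) q :
  (forall i, 0 < p i <= 1) -> 0 < q <= 1 -> \prod_(i < n) p i = q ^+ n ->
  \prod_(i < n) geom_cdf m (p i) <= geom_cdf m q ^+ n.
Proof.
move=> hp hq hprod; case: m => [|m].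
  by rewrite (eq_bigr (fun=> 0)) => [|i _]; rewrite ?prodr_const ?card_ord geom_cdf0.
have Fp i : 0 < geom_cdf m.+1 (p i) by rewrite geom_cdf_gt0.
have Fq : 0 < geom_cdf m.+1 q by rewrite geom_cdf_gt0.
have q_gt0 : 0 < q by case/andP: hq.
rewrite -ler_ln ?posrE ?exprn_gt0 ?prodr_gt0 // ln_prod // lnXn //.
have sum_ln : \sum_(i < n) ln (p i) = ln q *+ n.
  by rewrite -ln_prod -?lnXn ?hprod // => i _; case/andP: (hp i).
set c := geom_cdf_elasticity m.+1 q.
apply: (@le_trans _ _ (\sum_(i < n) (ln (geom_cdf m.+1 q) + c * (ln (p i) - ln q)))).
  by apply: ler_sum => i _; apply: ln_geom_cdf_tangent.
by rewrite big_split /= -mulr_sumr sumrB sum_ln !sumr_const card_ord subrr mulr0 addr0.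
Qed.

End GeomCdf.

Section MaxRV.
Context {R : realType} {T : Type}.

Lemma max_rv_ge0 n (Z : 'I_n -> T -> R) w : 0 <= max_rv Z w.
Proof. exact: bigmax_ge_id. Qed.

Lemma max_rv_leP n (Z : 'I_n -> T -> R) w z : 0 <= z ->
  max_rv Z w <= z <-> forall i, Z i w <= z.
Proof. by move=> z_ge0; split => [/bigmax_leP[_ + i] | Zz]; [apply | apply/bigmax_leP]. Qed.

Lemma max_rv_gt_setE n (Z : 'I_n -> T -> R) z : 0 <= z ->
  [set w | z < max_rv Z w] = ~` \bigcap_(i in [set: 'I_n]) (Z i @^-1` `]-oo, z]).
Proof.
move=> z_ge0; apply/seteqP; split => w /=.
- rewrite ltNge => /negP Zz ZI; apply/Zz/max_rv_leP => // i.
  by have := ZI i I; rewrite /preimage /= in_itv.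
- move=> ZI; rewrite ltNge; apply/negP => /max_rv_leP -/(_ z_ge0) Zz.
  by apply: ZI => i _; rewrite /preimage /= in_itv /= Zz.
Qed.

End MaxRV.

Section GeometricLaw.
Context {R : realType}.

Fixpoint natr_block (a L : nat) : set R :=
  if L is L'.+1 then natr_block a L' `|` [set (a + L').+1%:R] else set0.

Lemma natr_blockP a L x : natr_block a L x -> exists2 k, (a <= k < a + L)%N & x = k.+1%:R.
Proof.
elim: L => [//|L IH] /= [/IH[k /andP[ak kaL] ->]|->].
  by exists k; rewrite // ak addnS ltnS ltnW.
by exists (a + L)%N; rewrite // leq_addr addnS ltnSn.
Qed.

Lemma measurable_natr_block a L : measurable (natr_block a L).
Proof. by elim: L => [|L IH] /=; [exact: measurable0 | exact: measurableU]. Qed.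

Lemma exists_expr_lt (y e : R) : 0 <= y < 1 -> 0 < e -> exists L : nat, y ^+ L < e.
Proof.
move=> /andP[y_ge0 y_lt1] e_gt0.
have y_norm : `|y| < 1 by rewrite ger0_norm.
have [N _ yN] := cvgr0_norm_lt (GRing.exp y : R^nat) (cvg_expr y_norm) e e_gt0.
by exists N; have := yN N (leqnn N); rewrite /= ger0_norm ?exprn_ge0.
Qed.

Context {d : measure_display} {T : measurableType d} {P : probability T R}.
Context {X : {RV P >-> R}} {p : R}.
Hypotheses (hp : 0 < p <= 1) (hX : is_geom X p).

Lemma geom_natr_block a L :
  P (X @^-1` natr_block a L) = ((1 - p) ^+ a - (1 - p) ^+ (a + L))%:E.
Proof.
elim: L => [|L IH] /=; first by rewrite preimage_set0 measure0 addn0 subrr.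
have disj : natr_block a L `&` [set (a + L).+1%:R] = set0.
  apply/seteqP; split => // x [/natr_blockP[k /andP[_ kaL] ->] /= /eqP].
  by rewrite eqr_nat eqSS => /eqP kE; rewrite kE ltnn in kaL.
rewrite preimage_setU measureU -?preimage_setI ?disj ?preimage_set0 //;
  try exact: measurable_funPTI (measurable_natr_block _ _).
rewrite -[M in M + _]/(P (X @^-1` natr_block a L)) IH.
rewrite -[M in _ + M]/(P (X @^-1` [set (a + L).+1%:R])) hX.
by rewrite -EFinD addnS exprS; congr EFin; ring.
Qed.

Lemma is_geom_cdf z : P (X @^-1` `]-oo, z]) = (geom_cdf (Num.truncn z) p)%:E.
Proof.
set K := Num.truncn z; set A := X @^-1` `]-oo, z].
have mA : measurable A by exact: measurable_funPTI.
have mB a L : measurable (X @^-1` natr_block a L).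
  exact: measurable_funPTI (measurable_natr_block _ _).
have lower : ((geom_cdf K p)%:E <= P A)%E.
  have := geom_natr_block 0 K; rewrite expr0 add0n => <-.
  apply: le_measure; rewrite ?inE // => w /natr_blockP[k /andP[_ kK] Xw].
  by rewrite /A /preimage /= in_itv /= Xw -truncn_gt_nat.
(* The mass of {K+1, ..., K+L} lies outside A and tends to (1 - p)^K as L grows. *)
have upper L : (P (X @^-1` natr_block K L) <= 1 - P A)%E.
  rewrite -probability_setC //; apply: le_measure; rewrite ?inE //; first exact: measurableC.
  move=> w /natr_blockP[k /andP[Kk _] Xw]; rewrite /A /preimage /= in_itv /= Xw.
  by apply/negP; rewrite -ltNge -truncn_le_nat.
rewrite -(fineK (fin_num_measure P A mA)) in lower upper *.
set r := fine (P A) in lower upper *.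
rewrite lee_fin in lower; congr EFin; apply/le_anti; rewrite lower andbT.
have /andP[p_gt0 p_le1] := hp.
have y01 : 0 <= 1 - p < 1 by rewrite subr_ge0 p_le1 ltrBlDl ltrDr.
apply/ler_addgt0Pr => e /(exists_expr_lt _ _ y01)[L yL].
have := upper L; rewrite geom_natr_block -EFinB lee_fin /geom_cdf => rK.
have : (1 - p) ^+ (K + L) <= (1 - p) ^+ L.
  by case/andP: y01 => y_ge0 y_lt1; rewrite exprD ler_piMl ?exprn_ge0 ?exprn_ile1 // ltW.
lra.
Qed.

End GeometricLaw.

Section MaxOfIndependent.
Context {R : realType} {d : measure_display} {T : measurableType d}.
Context {P : probability T R}.

Lemma prob_max_rv_gt n (Z : 'I_n -> {RV P >-> R}) z :
  mutually_independent Z -> 0 <= z ->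
  P [set w | z < max_rv (fun i => Z i : T -> R) w]
  = (1 - \prod_(i < n) P (Z i @^-1` `]-oo, z]))%E.
Proof.
move=> indZ z_ge0; rewrite max_rv_gt_setE // probability_setC ?indZ //.
apply: fin_bigcap_measurable; first exact: finite_finset.
by move=> i _; exact: measurable_funPTI.
Qed.

Lemma prob_max_geom_gt n (Z : 'I_n -> {RV P >-> R}) (p : 'I_n -> R) z :
  (0 < n)%N -> (forall i, 0 < p i <= 1) ->
  mutually_independent Z -> (forall i, is_geom (Z i) (p i)) ->
  P [set w | z < max_rv (fun i => Z i : T -> R) w]
  = (1 - \prod_(i < n) geom_cdf (Num.truncn z) (p i))%:E.
Proof.
move=> n_gt0 hp indZ geomZ; have [z_ge0|z_lt0] := leP 0 z.
  rewrite prob_max_rv_gt // (eq_bigr _ (fun i _ => is_geom_cdf (hp i) (geomZ i) z)).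
  by rewrite prodEFin EFinB.
have -> : [set w | z < max_rv (fun i => Z i : T -> R) w] = setT.
  by apply/seteqP; split => // w _; rewrite /= (lt_le_trans z_lt0) ?max_rv_ge0.
have /truncn0Pn -> : ~~ (1 <= z) by rewrite -ltNge (lt_trans z_lt0) ?ltr01.
rewrite probability_setT (eq_bigr (fun=> 0)) => [|i _]; last exact: geom_cdf0.
by rewrite prodr_const card_ord expr0n gtn_eqF // subr0.
Qed.

End MaxOfIndependent.

Lemma powR_invn_exprn (R : realType) (a : R) n : (0 < n)%N -> 0 <= a ->
  (a `^ n%:R^-1) ^+ n = a.
Proof.
move=> n_gt0 a_ge0; rewrite -powR_mulrn ?powR_ge0 // -powRrM mulVf ?powRr1 //.
by rewrite pnatr_eq0 -lt0n.
Qed.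

Theorem mainTheorem1 (R : realType) (n : nat) (hn : (0 < n)%N)
  (ptot : R) (hp0 : 0 < ptot) (hp1 : ptot <= 1)
  (d1 : measure_display) (T1 : measurableType d1) (P1 : probability T1 R)
  (X : 'I_n -> {RV P1 >-> R}) (p : 'I_n -> R)
  (hp : forall i, 0 < p i <= 1) (hprod : \prod_(i < n) p i = ptot)
  (hindX : mutually_independent X) (hgeomX : forall i, is_geom (X i) (p i))
  (d2 : measure_display) (T2 : measurableType d2) (P2 : probability T2 R)
  (Y : 'I_n -> {RV P2 >-> R})
  (hindY : mutually_independent Y)
  (hgeomY : forall i, is_geom (Y i) (ptot `^ (n%:R)^-1)) :
  forall z : R,
    (P2 [set w | (z < max_rv (fun i => (Y i : T2 -> R)) w)%R]
     <= P1 [set w | (z < max_rv (fun i => (X i : T1 -> R)) w)%R])%E.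
Proof.
move=> z; set q := ptot `^ n%:R^-1.
have qn : q ^+ n = ptot by rewrite powR_invn_exprn // ltW.
have hq : 0 < q <= 1.
  by rewrite powR_gt0 //= -(powRr0 ptot) ger_powR ?hp0 ?invr_ge0 //.
rewrite (prob_max_geom_gt _ _ _ z hn (fun=> hq) hindY hgeomY).
rewrite (prob_max_geom_gt _ _ _ z hn hp hindX hgeomX).
rewrite lee_fin lerD2l lerN2 prodr_const card_ord.
by apply: prod_geom_cdf_le; rewrite // hprod qn.
Qed.
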